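(* Let $(M,\cdot,1)$ be a monoid, $\Sigma$ a finite alphabet and $L$ the set of all functions $\Sigma^*\to M$. Let $(g'_1,f'_1),\dots,(g'_n,f'_n)$, $n\ge0$, be factorizations on $L$ and let $r_1,\dots,r_n:\Sigma^*\to\Sigma^*$ be functions (word-transformations). For each $i$ put $(g_i,f_i)=(g'_i\circ\Delta_{r_i},\,f'_i\circ\Delta_{r_i})$. Let $(g,f)=(g_1,f_1)\ast\cdots\ast(g_n,f_n)$, i.e. $$g=\prod_{i=1}^n g_i\circ(f_{i-1}\circ\cdots\circ f_1),\qquad f=f_n\circ\cdots\circ f_1$$ (product taken in the order $i=1,\dots,n$). Then for every $\ell\in L$, $$g(\ell)\cdot f(\ell)=\Delta_{r_1\circ r_2\circ\cdots\circ r_n}(\ell)=\ell\circ r_1\circ r_2\circ\cdots\circ r_n,$$ where for $n=0$ the composite word-transformation is the identity (so the right side is $\ell$).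
   Context: Let $F$ be the set of functions $L\to L$ and $G$ the set of functions $L\to M$; for $g,g'\in G$, $(g\cdot g')(\ell)=g(\ell)\cdot g'(\ell)$, and an empty product in $G$ is the constant function $1$, an empty composition in $F$ is the identity. A factorization on $L$ is a pair $(g,f)\in G\times F$ with $g(\ell)\cdot f(\ell)=\ell$ for all $\ell\in L$. For a word-transformation $r:\Sigma^*\to\Sigma^*$, $\Delta_r\in F$ is defined by $\Delta_r(\ell)=\ell\circ r$. The operation $\ast$ on $G\times F$ is $(g_1,f_1)\ast(g_2,f_2)=(g_1\cdot(g_2\circ f_1),f_2\circ f_1)$. For $m\in M$ and $\ell\in L$, $m\cdot\ell$ is the $M$-language $\gamma\mapsto m\cdot\ell(\gamma)$. *)

From mathcomp Require Import all_boot.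
Set Implicit Arguments. Unset Strict Implicit. Unset Printing Implicit Defensive.

Section Factorizations.
(* A monoid (M, mul, one) given by explicit operations; axioms are passed as
   hypotheses of the theorem. Sigma is the alphabet, words are seq Sigma. *)
Variables (Sigma : finType) (M : Type) (mul : M -> M -> M) (one : M).

Definition lang := seq Sigma -> M.
Definition Gfun := lang -> M.
Definition Ffun := lang -> lang.

Definition lscale (m : M) (l : lang) : lang := fun w => mul m (l w).

Definition gmul (g1 g2 : Gfun) : Gfun := fun l => mul (g1 l) (g2 l).

Definition is_factorization (g : Gfun) (f : Ffun) : Prop :=
  forall l : lang, lscale (g l) (f l) = l.

Definition Delta (r : seq Sigma -> seq Sigma) : Ffun := fun l => l \o r.

Definition star (p1 p2 : Gfun * Ffun) : Gfun * Ffun :=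
  (gmul p1.1 (p2.1 \o p1.2), p2.2 \o p1.2).

Definition star_unit : Gfun * Ffun := (fun _ => one, id).

Definition star_big (n : nat) (p : nat -> Gfun * Ffun) : Gfun * Ffun :=
  foldr (fun i acc => star (p i) acc) star_unit (iota 0 n).

End Factorizations.

Definition comp_big (A : Type) (n : nat) (r : nat -> A -> A) : A -> A :=
  foldr (fun i acc => r i \o acc) id (iota 0 n).

From mathcomp Require Import all_boot.
From Stdlib Require Import FunctionalExtensionality.

(* Call a pair (g, f) a factorization of Delta_r when g(l) . f(l) = l o r for
   every l; the factorizations on L are those of Delta_id.  Precomposing a
   factorization with Delta_r gives a factorization of Delta_r, and the
   operation * sends factorizations of Delta_r1 and Delta_r2 to one of
   Delta_(r1 o r2), so the theorem follows by induction on n. *)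

Section FactorizationsOfDelta.
Variables (Sigma : finType) (M : Type) (mul : M -> M -> M) (one : M).
Hypotheses (mulA : associative mul) (mul1m : left_id one mul).

Definition factorizes (r : seq Sigma -> seq Sigma) (p : Gfun Sigma M * Ffun Sigma M) :=
  forall l : lang Sigma M, lscale mul (p.1 l) (p.2 l) = Delta r l.

Lemma factorizes_unit : factorizes id (star_unit Sigma one).
Proof. by move=> l; apply: functional_extensionality => w; rewrite /lscale /= mul1m. Qed.

Lemma factorizes_Delta (g : Gfun Sigma M) (f : Ffun Sigma M) r :
  is_factorization mul g f -> factorizes r (g \o Delta r, f \o Delta r).
Proof. by move=> gf l; apply: gf. Qed.

Lemma factorizes_star r1 r2 p1 p2 :
  factorizes r1 p1 -> factorizes r2 p2 -> factorizes (r1 \o r2) (star mul p1 p2).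
Proof.
move=> fact1 fact2 l; apply: functional_extensionality => w.
have /(congr1 (fun h => h w)) fact2_w := fact2 (p1.2 l).
have /(congr1 (fun h => h (r2 w))) fact1_w := fact1 l.
rewrite /lscale /Delta /= in fact1_w fact2_w.
by rewrite /lscale /gmul /= -mulA fact2_w.
Qed.

Lemma factorizes_star_foldr (I : eqType) (s : seq I) r p :
  {in s, forall i, factorizes (r i) (p i)} ->
  factorizes (foldr (fun i acc => r i \o acc) id s)
             (foldr (fun i acc => star mul (p i) acc) (star_unit Sigma one) s).
Proof.
elim: s => [|i s IHs] fact_s /=; first exact: factorizes_unit.
apply: factorizes_star; first by apply: fact_s; rewrite mem_head.
by apply: IHs => j s_j; apply: fact_s; rewrite inE s_j orbT.
Qed.

End FactorizationsOfDelta.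

(* Indices i = 1..n of the paper are 0..n-1 here. *)
Theorem lemma2 (M : Type) (mul : M -> M -> M) (one : M)
  (mulA : associative mul) (mul1m : left_id one mul) (mulm1 : right_id one mul)
  (Sigma : finType) (n : nat)
  (g' : nat -> Gfun Sigma M) (f' : nat -> Ffun Sigma M)
  (r : nat -> seq Sigma -> seq Sigma) :
  (forall i, i < n -> is_factorization mul (g' i) (f' i)) ->
  let p := fun i => (g' i \o @Delta Sigma M (r i), f' i \o @Delta Sigma M (r i)) in
  let gf := star_big mul one n p in
  forall l : lang Sigma M,
    lscale mul (gf.1 l) (gf.2 l) = @Delta Sigma M (comp_big n r) l.
Proof.
move=> fact_n p gf; apply: factorizes_star_foldr => // i.
by rewrite mem_iota => /fact_n; apply: factorizes_Delta.
Qed.
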